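(* Consider any finite set of votes published so far. Let $H$ be a set of validators holding at least $\frac23$ of the total deposit such that no validator in $H$ has violated slashing condition I or II, and such that the source of every vote previously published by a validator in $H$ is a justified checkpoint (with respect to the current set of published votes). Let $a$ be a justified checkpoint of maximal height, and let $B$ be the maximum of $h(a)$ and the heights of all targets of all votes published so far by any validator. Suppose $a'$ is a descendant of $a$ with $h(a')=B+1$ and $a''$ is a direct child of $a'$. If every validator in $H$ additionally publishes the two votes with (source, target) $=(a,a')$ and $(a',a'')$, then no validator in $H$ violates slashing condition I or II, and $a'$ becomes finalized.
   Context: Checkpoints form a rooted tree (the checkpoint tree) with root $r$. For a checkpoint $c$, its height $h(c)$ is the number of edges on the path from $c$ to $r$, so $h(r)=0$ and a child has height one more than its parent. There is a fixed finite set of validators, each with a positive deposit; fractions of validators are always deposit-weighted. A vote is a signed message $\langle \nu, s, t, h(s), h(t)\rangle$ from validator $\nu$, where $s$ (source) and $t$ (target) are checkpoints and $s$ is a strict ancestor of $t$. A supermajority link $s\to t$ is an ordered pair of checkpoints such that validators holding at least $\frac23$ of the total deposit have published the vote with source $s$ and target $t$. A checkpoint $c$ is justified if $c=r$ or there is a supermajority link $c'\to c$ with $c'$ justified. A checkpoint $c$ is finalized if $c=r$, or $c$ is justified and there is a supermajority link $c\to c'$ where $c'$ is a direct child of $c$. Slashing conditions: a validator $\nu$ violates a slashing condition if it publishes two distinct votes $\langle \nu,s_1,t_1,h(s_1),h(t_1)\rangle$ and $\langle \nu,s_2,t_2,h(s_2),h(t_2)\rangle$ such that either (I) $h(t_1)=h(t_2)$,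 or (II) $h(s_1)<h(s_2)<h(t_2)<h(t_1)$. *)

From HB Require Import structures.
From mathcomp Require Import all_boot all_order all_algebra.
Set Implicit Arguments. Unset Strict Implicit. Unset Printing Implicit Defensive.
Import Order.TTheory GRing.Theory Num.Theory.

Section Casper.
Variables (T : eqType) (r : T) (parent : T -> T) (h : T -> nat).

(* Rooted tree axioms: the root is its own "parent" (sentinel) and has
   height 0; every other checkpoint has height one more than its parent.
   Hence iterating [parent] from any checkpoint reaches [r]. *)
Definition is_tree : Prop :=
  [/\ parent r = r, h r = 0%N & forall c, c <> r -> h c = (h (parent c)).+1].

Definition ancestor (s t : T) : Prop := exists k, iter k parent t = s.

Definition strict_ancestor (s t : T) : Prop :=
  exists k, (0 < k <= h t)%N /\ iter k parent t = s.

Definition direct_child (c c' : T) : Prop := c' <> r /\ parent c' = c.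

Variables (V : finType) (R : realFieldType) (dep : V -> R).

(* A vote <nu, s, t, h s, h t> is represented by ((nu, s), t); the heights
   are determined by s and t. *)
Definition vote := (V * T * T)%type.
Definition voter (x : vote) : V := x.1.1.
Definition vsource (x : vote) : T := x.1.2.
Definition vtarget (x : vote) : T := x.2.

Definition valid_vote (x : vote) : Prop := strict_ancestor (vsource x) (vtarget x).

Local Open Scope ring_scope.

Definition two_thirds (S : {set V}) : Prop :=
  2%:R * (\sum_(v : V) dep v) <= 3%:R * (\sum_(v in S) dep v).

Definition sm_link (vs : seq vote) (s t : T) : Prop :=
  two_thirds [set v | (v, s, t) \in vs].

Inductive justified (vs : seq vote) : T -> Prop :=
| justified_root : justified vs r
| justified_link c' c : justified vs c' -> sm_link vs c' c -> justified vs c.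

Definition finalized (vs : seq vote) (c : T) : Prop :=
  c = r \/ (justified vs c /\ exists c', direct_child c c' /\ sm_link vs c c').

Definition slashed (vs : seq vote) (nu : V) : Prop :=
  exists s1 t1 s2 t2,
    [/\ (nu, s1, t1) \in vs, (nu, s2, t2) \in vs, (s1, t1) != (s2, t2) &
        h t1 = h t2 \/ (h s1 < h s2 < h t2)%N && (h t2 < h t1)%N].

End Casper.

(* The two new votes of an honest validator have targets above every target
   published so far, and a source at least as high as every source it has used
   (its sources are justified, hence no higher than [a]); the second new vote
   likewise dominates the first.  A vote that dominates another in this sense
   -- source no lower, target strictly higher -- can neither share its target
   height nor be surrounded by it, so no slashing condition can fire.
   Finalization of [a'] is immediate: the first batch of votes is a
   supermajority link from the justified [a] to [a'], the second one from [a']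
   to its child [a''], and justification is monotone in the set of votes. *)

From HB Require Import structures.
From mathcomp Require Import all_boot all_order all_algebra.
From mathcomp Require Import zify.
Import Order.TTheory GRing.Theory Num.Theory.

Set Implicit Arguments.
Unset Strict Implicit.
Unset Printing Implicit Defensive.

Lemma direct_child_height (T : eqType) (r : T) (parent : T -> T) (h : T -> nat)
    (c c' : T) :
  is_tree r parent h -> direct_child r parent c c' -> h c' = (h c).+1.
Proof. by case=> _ _ hS [c'_neq_r <-]; exact: hS. Qed.

Section Votes.

Variables (T : eqType) (r : T) (h : T -> nat).
Variables (V : finType) (R : realFieldType) (dep : V -> R).
Hypothesis dep_gt0 : forall v, (0 < dep v)%R.

Definition votes_by (S : {set V}) (s t : T) : seq (vote T V) :=
  [seq (v, s, t) | v <- enum S].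

Lemma mem_votes_by (S : {set V}) s t v s' t' :
  ((v, s', t') \in votes_by S s t) = [&& v \in S, s' == s & t' == t].
Proof.
apply/mapP/and3P => [[w] | [vS /eqP-> /eqP->]]; last by exists v; rewrite ?mem_enum.
by rewrite mem_enum => wS [-> -> ->]; rewrite !eqxx.
Qed.

Lemma two_thirds_subset (S S' : {set V}) :
  S \subset S' -> two_thirds dep S -> two_thirds dep S'.
Proof.
move=> /subsetP sub_SS' /le_trans; apply; rewrite ler_pM2l ?ltr0n //.
rewrite [leLHS]big_mkcond [leRHS]big_mkcond /=; apply: ler_sum => v _.
case: ifP => [/sub_SS'-> // | _]; case: ifP => // _; exact: ltW.
Qed.

Lemma sm_link_votes_by (vs : seq (vote T V)) (S : {set V}) s t :
  two_thirds dep S -> {subset votes_by S s t <= vs} -> sm_link dep vs s t.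
Proof.
move=> S23 sub_vs; apply: two_thirds_subset S23; apply/subsetP => v vS.
by rewrite inE sub_vs // mem_votes_by vS !eqxx.
Qed.

Lemma justified_subset (vs vs' : seq (vote T V)) c :
  {subset vs <= vs'} -> justified r dep vs c -> justified r dep vs' c.
Proof.
move=> sub_vs; elim=> [|c0 c1 _ IH link]; first exact: justified_root.
apply: justified_link IH _; apply: two_thirds_subset link.
by apply/subsetP => v; rewrite !inE; exact: sub_vs.
Qed.

Definition slashable (s1 t1 s2 t2 : T) : Prop :=
  h t1 = h t2 \/ (h s1 < h s2 < h t2)%N && (h t2 < h t1)%N.

Definition dominates (s1 t1 s2 t2 : T) : bool :=
  (h s2 <= h s1)%N && (h t2 < h t1)%N.

Lemma dominates_not_slashable s1 t1 s2 t2 :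
  dominates s1 t1 s2 t2 -> ~ slashable s1 t1 s2 t2 /\ ~ slashable s2 t2 s1 t1.
Proof. by rewrite /dominates /slashable => /andP[? ?]; split; case; lia. Qed.

Lemma not_slashed_cat (vs ns : seq (vote T V)) v :
  ~ slashed h vs v ->
  (forall s1 t1 s2 t2, (v, s1, t1) \in vs ++ ns -> (v, s2, t2) \in ns ->
     (s1, t1) != (s2, t2) -> dominates s1 t1 s2 t2 || dominates s2 t2 s1 t1) ->
  ~ slashed h (vs ++ ns) v.
Proof.
move=> unslashed comparable [s1 [t1 [s2 [t2 [in1 in2 neq cond]]]]].
have comparable_not_slashable s t s' t' :
    (v, s, t) \in vs ++ ns -> (v, s', t') \in ns -> (s, t) != (s', t') ->
    ~ slashable s t s' t' /\ ~ slashable s' t' s t.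
  move=> in_st in_st' neq'; case/orP: (comparable _ _ _ _ in_st in_st' neq').
    exact: dominates_not_slashable.
  by move/dominates_not_slashable => [].
case ns2: ((v, s2, t2) \in ns).
  exact: (comparable_not_slashable _ _ _ _ in1 ns2 neq).1.
case ns1: ((v, s1, t1) \in ns).
  by apply: (comparable_not_slashable _ _ _ _ in2 ns1 _).2; rewrite // eq_sym.
move: in1 in2; rewrite !mem_cat ns1 ns2 !orbF => in1 in2.
by apply: unslashed; exists s1, t1, s2, t2.
Qed.

End Votes.

Theorem theorem2
  (T : eqType) (r : T) (parent : T -> T) (h : T -> nat)
  (Htree : is_tree r parent h)
  (V : finType) (R : realFieldType) (dep : V -> R)
  (Hdep : forall v, (0 < dep v)%R)
  (vs : seq (vote T V))
  (Hvalid : forall x, x \in vs -> valid_vote parent h x)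
  (H : {set V})
  (HH : two_thirds dep H)
  (Hnoslash : forall v, v \in H -> ~ slashed h vs v)
  (Hsrc : forall v s t, v \in H -> (v, s, t) \in vs -> justified r dep vs s)
  (a : T)
  (Ha : justified r dep vs a)
  (Hamax : forall c, justified r dep vs c -> (h c <= h a)%N)
  (B : nat)
  (HB : B = maxn (h a) (\max_(x <- vs) h (vtarget x)))
  (a' a'' : T)
  (Ha' : ancestor parent a a') (Ha'h : h a' = B.+1)
  (Ha'' : direct_child r parent a' a'') :
  let vs' := vs ++ [seq (v, a, a') | v <- enum H]
                ++ [seq (v, a', a'') | v <- enum H] in
  (forall v, v \in H -> ~ slashed h vs' v) /\ finalized r parent dep vs' a'.
Proof.
rewrite /= -/(votes_by H a a') -/(votes_by H a' a'').
have Ha''h : h a'' = B.+2 by rewrite (direct_child_height Htree Ha'') Ha'h.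
have ha_le_B : (h a <= B)%N by rewrite HB leq_maxl.
have old_vote_low v s t :
    v \in H -> (v, s, t) \in vs -> (h s <= h a)%N /\ (h t <= B)%N.
  move=> vH vst; split; first exact/Hamax/(Hsrc _ _ _ vH vst).
  rewrite HB; apply: leq_trans (leq_maxr _ _).
  exact: (leq_bigmax_seq _ vst).
split=> [v vH | ].
  apply: not_slashed_cat (Hnoslash v vH) _ => s1 t1 s2 t2 in1.
  rewrite !mem_cat !mem_votes_by vH /dominates /= in in1 *.
  move=> /orP[] /andP[/eqP-> /eqP->]; case/or3P: in1 =>
      [/(old_vote_low _ _ _ vH) [? ?] _ | /andP[/eqP-> /eqP->] | /andP[/eqP-> /eqP->]];
    rewrite ?eqxx // ?Ha'h ?Ha''h; lia.
right; split; last first.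
  by exists a''; split=> //; apply: (sm_link_votes_by Hdep HH) => x x_in;
     rewrite !mem_cat x_in !orbT.
apply: (justified_link (c' := a)).
  by apply: (justified_subset Hdep _ Ha) => x x_in; rewrite mem_cat x_in.
by apply: (sm_link_votes_by Hdep HH) => x x_in; rewrite !mem_cat x_in orbT.
Qed.
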